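(* Let $\mathbf q\in\mathbb Z_{\ge2}^n$. Then for every integer $m\ge2$, the simplex $\Delta_{(1,\mathrm{rs}(\mathbf q,m))}$ does not have the integer decomposition property.
   Context: For $\mathbf p=(p_1,\dots,p_N)\in\mathbb Z_{\ge1}^N$ (entries listed in weakly increasing order), let $\Delta_{(1,\mathbf p)}=\mathrm{conv}\{e_1,\dots,e_N,-\sum_{i=1}^N p_ie_i\}\subset\mathbb R^N$; $\Delta_{(1,\mathbf p)}$ is reflexive if and only if $p_i$ divides $1+\sum_j p_j$ for all $i$. For $\mathbf q\in\mathbb Z_{\ge1}^n$, let $\mathrm{lcm}(\mathbf q)$ be the least common multiple of its entries, and let $\mathrm{rsn}(\mathbf q)$ be the least integer $k\ge0$ such that the vector $(1^k,\mathbf q)$, obtained by prepending $k$ entries equal to $1$ to $\mathbf q$, gives a reflexive simplex. For $m\ge1$, $\mathrm{rs}(\mathbf q,m)=(1^{\mathrm{rsn}(\mathbf q)+(m-1)\mathrm{lcm}(\mathbf q)},\mathbf q)$. A lattice polytope $P\subset\mathbb R^N$ has the integer decomposition property if for every integer $m\ge1$, every point of $mP\cap\mathbb Z^N$ is a sum of $m$ points of $P\cap\mathbb Z^N$. *)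

From HB Require Import structures.
From mathcomp Require Import all_boot all_order all_algebra.
From mathcomp Require Import reals.
From mathcomp Require Import zify.
Set Implicit Arguments. Unset Strict Implicit. Unset Printing Implicit Defensive.
Import Order.TTheory GRing.Theory Num.Theory.

Definition lcm_seq (q : seq nat) : nat := foldr lcmn 1%N q.

(* Reflexivity criterion from the context: Delta_(1,p) is reflexive iff
   p_i divides 1 + sum_j p_j for all i. *)
Definition reflexive_weights (p : seq nat) : bool :=
  all (fun pi => pi %| (1 + sumn p))%N p.

Definition prepend_ones (k : nat) (q : seq nat) : seq nat := nseq k 1%N ++ q.

Lemma dvdn_lcm_seq (q : seq nat) x : x \in q -> (x %| lcm_seq q)%N.
Proof.
elim: q => [//|y q IH]; rewrite inE /= => /orP [/eqP ->|xq].
  exact: dvdn_lcml.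
exact: dvdn_trans (IH xq) (dvdn_lcmr _ _).
Qed.

(* Totalization: if q has a zero entry no k works; then the predicate below
   is trivially true (garbage value 0). Irrelevant for q in Z_{>=2}^n. *)
Definition rsn_pred (q : seq nat) (k : nat) : bool :=
  reflexive_weights (prepend_ones k q) || (0%N \in q).

Lemma rsn_exists (q : seq nat) : exists k, rsn_pred q k.
Proof.
case: (boolP (0%N \in q)) => q0; first by exists 0%N; rewrite /rsn_pred q0 orbT.
exists ((lcm_seq q).-1 * (1 + sumn q))%N; apply/orP; left.
have lpos : (0 < lcm_seq q)%N.
  rewrite /lcm_seq; elim: q q0 => [//|y q IH] /=; rewrite inE negb_or.
  move/andP=> [y0 qn]; rewrite lcmn_gt0 (IH qn) andbT lt0n eq_sym //.
apply/allP => x; rewrite /prepend_ones mem_cat => /orP [].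
  by rewrite mem_nseq => /andP [_ /eqP ->]; rewrite dvd1n.
move=> xq.
have -> : (1 + sumn (nseq ((lcm_seq q).-1 * (1 + sumn q)) 1 ++ q)
          = lcm_seq q * (1 + sumn q))%N.
  rewrite sumn_cat.
  have -> : forall k, sumn (nseq k 1%N) = k by elim=> //= k ->; rewrite add1n.
  move: lpos; case: (lcm_seq q) => [//|l] _ /=; rewrite mulSn; lia.
by rewrite dvdn_mulr // dvdn_lcm_seq.
Qed.

Definition rsn (q : seq nat) : nat := ex_minn (rsn_exists q).

Definition rs (q : seq nat) (m : nat) : seq nat :=
  prepend_ones (rsn q + (m - 1) * lcm_seq q)%N q.

Local Open Scope ring_scope.

Definition in_conv (R : realType) (N : nat) (V : seq 'rV[R]_N) (x : 'rV[R]_N)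
  : Prop :=
  exists w : 'I_(size V) -> R,
    [/\ forall i, 0 <= w i, \sum_i w i = 1 & x = \sum_i w i *: V`_i].

(* Delta_(1,p) = conv{e_1, ..., e_N, - sum_i p_i e_i} in R^N, N = size p *)
Definition simplex_vertices (R : realType) (p : seq nat) : seq 'rV[R]_(size p) :=
  (\row_(i < size p) - ((nth 0%N p i)%:R : R)) ::
    [seq delta_mx 0 i | i <- enum 'I_(size p)].

Definition Delta (R : realType) (p : seq nat) : 'rV[R]_(size p) -> Prop :=
  in_conv (simplex_vertices R p).

Definition dilate (R : realType) (N : nat) (k : nat) (P : 'rV[R]_N -> Prop)
  (x : 'rV[R]_N) : Prop := exists2 y, P y & x = k%:R *: y.

Definition lat (R : realType) (N : nat) (z : 'rV[int]_N) : 'rV[R]_N :=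
  map_mx (fun a : int => a%:~R) z.

Definition IDP (R : realType) (N : nat) (P : 'rV[R]_N -> Prop) : Prop :=
  forall (m : nat), (1 <= m)%N ->
  forall x : 'rV[int]_N, dilate m P (lat R x) ->
  exists ys : 'I_m -> 'rV[int]_N,
    (forall j, P (lat R (ys j))) /\ x = \sum_j ys j.

From HB Require Import structures.
From mathcomp Require Import all_boot all_order all_algebra.
From mathcomp Require Import reals.
From mathcomp Require Import zify ring.

(* For p = (p_1, ..., p_N) put S = 1 + sum p.  A point z of R^N is written in
   barycentric coordinates with respect to the vertices -p, e_1, ..., e_N of
   the dilate h Delta_(1,p); S times these coordinates are the affine
   "weights"  weight0 h z = h - sum_i z_i  (apex -p)  and
   weight p h z k = S z_k + weight0 h z * p_k  (vertex e_k).  We show that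
   Delta_(1,p) is exactly the set of points with nonnegative weights at level
   1, which turns membership of lattice points in Delta_(1,p) and in its
   dilates into integer inequalities, and weights are additive in sums.

   The general criterion [not_IDP_of_residues]: if an entry c of p divides S
   and the residues p_i mod c add up to at least c, then the lattice point
   x = (-floor(p_i / c))_i lies in h Delta_(1,p) for h = S/c - sum floor(p_i/c)
   >= 2, with apex weight S/c, weight 0 at the entry c and all weights below
   S.  In a decomposition of x into h lattice points of Delta_(1,p) every
   summand would have apex weight at least S/c, for a total of h S/c > S/c.

   For p = rs(q,m) and c = q_1 the simplex is reflexive, so c divides S, and
   the (m-1) lcm(q) >= c prepended ones each leave residue 1 modulo c. *)

Set Implicit Arguments. Unset Strict Implicit. Unset Printing Implicit Defensive.
Import Order.TTheory GRing.Theory Num.Theory.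
Local Open Scope ring_scope.

Lemma sum_nth_map (p : seq nat) (f : nat -> nat) :
  (\sum_(i < size p) f (nth 0 p i) = sumn [seq f x | x <- p])%N.
Proof. by rewrite sumnE big_map (big_nth 0%N) big_mkord. Qed.

Lemma sumn_divn_eq (p : seq nat) (c : nat) :
  sumn p = (c * sumn [seq x %/ c | x <- p] + sumn [seq x %% c | x <- p])%N.
Proof.
by elim: p => [|a s IH] /=; rewrite ?muln0 // IH {1}(divn_eq a c); ring.
Qed.

Lemma ler_sum_term (I : finType) (F : I -> int) j :
  (forall i, 0 <= F i) -> F j <= \sum_i F i.
Proof. by move=> F_ge0; rewrite (bigD1 j) //= lerDl sumr_ge0. Qed.

(* S times the barycentric coordinates of z with respect to h Delta_(1,p):
   weight0 for the apex -p, weight for the vertex e_k. *)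
Definition weight0 (T : pzRingType) (N : nat) (h : T) (z : 'rV[T]_N) : T :=
  h - \sum_i z 0 i.

Definition weight (T : pzRingType) (p : seq nat) (h : T) (z : 'rV[T]_(size p))
    (k : 'I_(size p)) : T :=
  (1 + sumn p)%:R * z 0 k + weight0 h z * (nth 0%N p k)%:R.

(* The weight vector is indexed by p, which is not inferable from z. *)
Arguments weight {T} p h z k.

Section Weights.
Variables (T : comPzRingType) (p : seq nat).

Lemma sum_nth_natr : \sum_(i < size p) (nth 0%N p i)%:R = (sumn p)%:R :> T.
Proof. by rewrite -natr_sum sumnE (big_nth 0%N) big_mkord. Qed.

Lemma weights_total (h : T) (z : 'rV[T]_(size p)) :
  weight0 h z + \sum_k weight p h z k = (1 + sumn p)%:R * h.
Proof.
rewrite /weight big_split /= -mulr_sumr -mulr_sumr sum_nth_natr /weight0 natrD.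
ring.
Qed.

Lemma weight_sub_apex (h : T) (z : 'rV[T]_(size p)) k :
  weight p h z k - weight0 h z * (nth 0%N p k)%:R = (1 + sumn p)%:R * z 0 k.
Proof. by rewrite /weight addrK. Qed.

Lemma weight0Z (a h : T) (z : 'rV[T]_(size p)) :
  weight0 (a * h) (a *: z) = a * weight0 h z.
Proof.
rewrite /weight0 mulrBr mulr_sumr; congr (_ - _).
by apply: eq_bigr => i _; rewrite mxE.
Qed.

Lemma weightZ (a h : T) (z : 'rV[T]_(size p)) k :
  weight p (a * h) (a *: z) k = a * weight p h z k.
Proof. by rewrite /weight weight0Z mxE; ring. Qed.

Lemma weight0_sum (n : nat) (y : 'I_n -> 'rV[T]_(size p)) :
  weight0 n%:R (\sum_r y r) = \sum_r weight0 1 (y r).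
Proof.
rewrite /weight0 sumrB sumr_const card_ord; congr (_ - _).
by rewrite exchange_big; apply: eq_bigr => i _; rewrite summxE.
Qed.

Lemma weight_sum (n : nat) (y : 'I_n -> 'rV[T]_(size p)) k :
  weight p n%:R (\sum_r y r) k = \sum_r weight p 1 (y r) k.
Proof.
by rewrite [LHS]/weight weight0_sum summxE mulr_sumr mulr_suml -big_split.
Qed.

End Weights.

Lemma in_conv_affine_ge0 (R : realType) N (V : seq 'rV[R]_N) (a : R)
    (c : 'I_N -> R) z :
  (forall v, v \in V -> 0 <= a + \sum_i c i * v 0 i) ->
  in_conv V z -> 0 <= a + \sum_i c i * z 0 i.
Proof.
move=> Vge0 [w [w_ge0 w_sum1 ->]].
have -> : a + \sum_i c i * (\sum_j w j *: V`_j) 0 i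
        = \sum_j w j * (a + \sum_i c i * V`_j 0 i).
  under eq_bigr do rewrite summxE mulr_sumr.
  rewrite exchange_big /= -[a in a + _]mul1r -w_sum1 mulr_suml -big_split /=.
  apply: eq_bigr => j _; rewrite mulrDr mulr_sumr; congr (_ + _).
  by apply: eq_bigr => i _; rewrite mxE mulrCA.
by apply: sumr_ge0 => j _; rewrite mulr_ge0 // Vge0 // mem_nth.
Qed.

Section SimplexFacets.
Variables (R : realType) (p : seq nat).
Let S : R := (1 + sumn p)%:R.
Let apex : 'rV[R]_(size p) := \row_(i < size p) - ((nth 0%N p i)%:R : R).

Lemma total_weight_gt0 : 0 < S. Proof. by rewrite /S ltr0n. Qed.

Lemma sum_row_delta (c : 'I_(size p) -> R) (j : 'I_(size p)) :
  \sum_i c i * (delta_mx 0 j : 'rV[R]_(size p)) 0 i = c j.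
Proof.
rewrite (bigD1 j) //= mxE !eqxx mulr1 big1 ?addr0 // => i ij.
by rewrite mxE (negbTE ij) mulr0.
Qed.

Lemma sum_col_delta (c : 'I_(size p) -> R) (i : 'I_(size p)) :
  \sum_j c j * (delta_mx 0 j : 'rV[R]_(size p)) 0 i = c i.
Proof.
rewrite (bigD1 i) //= mxE !eqxx mulr1 big1 ?addr0 // => j ji.
by rewrite mxE eq_sym (negbTE ji) mulr0.
Qed.

Lemma sum_apex (c : 'I_(size p) -> R) :
  \sum_i c i * apex 0 i = - \sum_i c i * (nth 0%N p i)%:R.
Proof. by rewrite -sumrN; apply: eq_bigr => i _; rewrite mxE mulrN. Qed.

(* At level 1 the weights are affine functionals of the point, in the form
   required by [in_conv_affine_ge0]. *)
Lemma weight0_affine (z : 'rV[R]_(size p)) :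
  weight0 1 z = 1 + \sum_i (-1) * z 0 i.
Proof.
by rewrite /weight0 -sumrN; congr (_ + _); apply: eq_bigr => i _; rewrite mulN1r.
Qed.

Lemma weight_affine (z : 'rV[R]_(size p)) k :
  weight p 1 z k =
  (nth 0%N p k)%:R + \sum_i (S * (i == k)%:R - (nth 0%N p k)%:R) * z 0 i.
Proof.
under eq_bigr do rewrite mulrBl.
rewrite sumrB (bigD1 k) //= big1 => [|i /negbTE ->]; last by rewrite !mulr0 mul0r.
by rewrite eqxx mulr1 addr0 -mulr_sumr /weight /weight0 -/S; ring.
Qed.

Lemma weight0_apex : weight0 1 apex = S.
Proof.
by rewrite weight0_affine sum_apex; under eq_bigr do rewrite mulN1r;
  rewrite sumrN opprK sum_nth_natr /S natrD.
Qed.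

Lemma weight_apex k : weight p 1 apex k = 0.
Proof. by rewrite /weight weight0_apex mxE -/S mulrN addrC mulrC subrr. Qed.

Lemma weight0_basis j : weight0 1 (delta_mx 0 j : 'rV[R]_(size p)) = 0.
Proof.
by rewrite /weight0 -(sum_row_delta (fun=> 1) j); under eq_bigr do rewrite mul1r;
  rewrite subrr.
Qed.

Lemma weight_basis j k :
  weight p 1 (delta_mx 0 j : 'rV[R]_(size p)) k = S * (j == k)%:R.
Proof. by rewrite /weight weight0_basis mul0r addr0 mxE eqxx eq_sym. Qed.

Lemma simplex_vertex_cases v :
  v \in simplex_vertices R p -> v = apex \/ exists j, v = delta_mx 0 j.
Proof.
by rewrite inE => /orP [/eqP ->|/mapP [j _ ->]]; [left | right; exists j].
Qed.

Lemma sum_simplex_vertices (V : nmodType) (G : nat -> V) :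
  \sum_(j < size (simplex_vertices R p)) G j = G 0%N + \sum_(i < size p) G i.+1.
Proof.
by rewrite -(big_mkord xpredT G) /= size_map size_enum_ord big_nat_recl // big_mkord.
Qed.

Lemma Delta_weights_ge0 z :
  @Delta R p z -> 0 <= weight0 1 z /\ forall k, 0 <= weight p 1 z k.
Proof.
move=> zD; split.
  rewrite weight0_affine; apply: in_conv_affine_ge0 zD => v.
  case/simplex_vertex_cases => [->|[j ->]]; rewrite -weight0_affine.
    by rewrite weight0_apex ltW // total_weight_gt0.
  by rewrite weight0_basis.
move=> k; rewrite weight_affine; apply: in_conv_affine_ge0 zD => v.
case/simplex_vertex_cases => [->|[j ->]]; rewrite -weight_affine.
  by rewrite weight_apex.
by rewrite weight_basis mulr_ge0 ?ler0n // ltW // total_weight_gt0.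
Qed.

(* Conversely, a point with nonnegative weights lies in Delta_(1,p): its
   barycentric coordinates are its weights divided by 1 + sum p. *)
Lemma Delta_of_weights_ge0 z :
  0 <= weight0 1 z -> (forall k, 0 <= weight p 1 z k) -> @Delta R p z.
Proof.
move=> w0_ge0 w_ge0.
pose w := weight0 1 z :: [seq weight p 1 z k | k <- enum 'I_(size p)].
have wS (k : 'I_(size p)) : nth 0 w k.+1 = weight p 1 z k.
  by rewrite /= (nth_map k) ?size_enum_ord // nth_ord_enum.
have S_neq0 : S != 0 by rewrite gt_eqF // total_weight_gt0.
exists (fun j => S^-1 * nth 0 w j); split.
- move=> [[|j] _] /=; rewrite mulr_ge0 ?invr_ge0 ?(ltW total_weight_gt0) //.
  have [jp|jp] := ltnP j (size p).
    by move: (wS (Ordinal jp)) => /= ->.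
  by rewrite nth_default // size_map size_enum_ord.
- rewrite -mulr_sumr (sum_simplex_vertices (fun j => nth 0 w j)).
  under eq_bigr do rewrite wS.
  by rewrite weights_total mulr1 mulVf.
- rewrite (sum_simplex_vertices
    (fun j => S^-1 * nth 0 w j *: (simplex_vertices R p)`_j)).
  under eq_bigr => k _ do rewrite wS /= (nth_map k) ?size_enum_ord // nth_ord_enum.
  apply/rowP => i; rewrite !mxE summxE.
  under eq_bigr do rewrite mxE.
  rewrite (sum_col_delta (fun k => S^-1 * weight p 1 z k)) /= mulrN -mulrA.
  by rewrite -mulrN -mulrDr addrC weight_sub_apex mulrA mulVf // mul1r.
Qed.
End SimplexFacets.

Section LatticePoints.
Variables (R : realType) (p : seq nat).

Lemma weight0_lat (h : int) (y : 'rV[int]_(size p)) :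
  weight0 h%:~R (lat R y) = (weight0 h y)%:~R.
Proof.
rewrite /weight0 intrB rmorph_sum; congr (_ - _).
by apply: eq_bigr => i _; rewrite mxE.
Qed.

Lemma weight_lat (h : int) (y : 'rV[int]_(size p)) k :
  weight p h%:~R (lat R y) k = (weight p h y k)%:~R.
Proof. by rewrite /weight weight0_lat [in RHS]intrD !intrM !mulrz_nat mxE. Qed.

Lemma lattice_Delta_weights (y : 'rV[int]_(size p)) :
  @Delta R p (lat R y) -> 0 <= weight0 1 y /\ forall k, 0 <= weight p 1 y k.
Proof.
case/Delta_weights_ge0; rewrite -[1 : R]/(1%:~R) weight0_lat ler0z => -> w_ge0.
by split=> // k; rewrite -(ler0z R) -weight_lat.
Qed.

Lemma dilate_Delta_of_weights (h : nat) (x : 'rV[int]_(size p)) :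
  (0 < h)%N -> 0 <= weight0 h%:R x -> (forall k, 0 <= weight p h%:R x k) ->
  dilate h (@Delta R p) (lat R x).
Proof.
move=> h_gt0 w0_ge0 w_ge0.
have hR : (h%:R : R) != 0 by rewrite pnatr_eq0 -lt0n.
have scale1 : (1 : R) = h%:R^-1 * (h%:R : int)%:~R by rewrite mulrz_nat mulVf.
exists (h%:R^-1 *: lat R x); last by rewrite scalerA mulfV ?scale1r.
apply: Delta_of_weights_ge0 => [|k].
  rewrite [X in weight0 X]scale1 weight0Z weight0_lat.
  by rewrite mulr_ge0 ?invr_ge0 ?ler0n ?ler0z.
rewrite [X in weight _ X]scale1 weightZ weight_lat.
by rewrite mulr_ge0 ?invr_ge0 ?ler0n ?ler0z.
Qed.
End LatticePoints.

Section Indecomposable.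
Variable p : seq nat.
Let S : int := (1 + sumn p)%:R.

(* Here and below, matrix entries and weights are abstracted by [move: (...) => t]
   before calling lia/nia, which do not identify them across the ring
   structures through which they are typed. *)

Lemma weight0_gt0_of_small_weights (y : 'rV[int]_(size p)) :
  0 <= weight0 1 y -> (forall i, 0 <= weight p 1 y i) ->
  (forall i, weight p 1 y i < S) -> 0 < weight0 1 y.
Proof.
move=> w0_ge0 w_ge0 w_lt; rewrite lt_def w0_ge0 andbT; apply/eqP => w0_eq0.
have y_eq0 i : y 0 i = 0.
  move: (w_ge0 i) (w_lt i); rewrite /weight w0_eq0 mul0r addr0 /S natz.
  by move: (y 0 i) => t; nia.
by move: w0_eq0; rewrite /weight0 big1 // => i _; rewrite y_eq0.
Qed.

Lemma apex_weight_bound (y : 'rV[int]_(size p)) (k : 'I_(size p)) (c : nat) :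
  (0 < c)%N -> nth 0%N p k = c -> weight p 1 y k = 0 -> 0 < weight0 1 y ->
  S <= c%:R * weight0 1 y.
Proof.
rewrite /weight /S !natz => c_gt0 ->.
move: (y 0 k) (weight0 1 y) => t w E w_pos.
have t_neg : t <= -1 by nia.
nia.
Qed.

Lemma not_sum_of_lattice_points (h : nat) (x : 'rV[int]_(size p))
    (k : 'I_(size p)) (c : nat) (ys : 'I_h -> 'rV[int]_(size p)) :
  (2 <= h)%N -> nth 0%N p k = c -> c%:R * weight0 h%:R x = S ->
  weight p h%:R x k = 0 -> (forall i, weight p h%:R x i < S) ->
  (forall r, 0 <= weight0 1 (ys r) /\ forall i, 0 <= weight p 1 (ys r) i) ->
  x != \sum_r ys r.
Proof.
move=> h_ge2 pk cw0 wk w_lt ys_in; apply/eqP => xE.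
subst x; rewrite weight0_sum in cw0; rewrite weight_sum in wk.
have S_gt0 : 0 < S by rewrite /S ltr0n.
have c_gt0 : (0 < c)%N.
  by rewrite lt0n; apply: contraTneq S_gt0 => c0; rewrite -cw0 c0 mul0r.
have wr_lt r i : weight p 1 (ys r) i < S.
  apply: le_lt_trans (w_lt i); rewrite weight_sum.
  by apply: ler_sum_term => r'; exact: (ys_in r').2.
have wr_k r : weight p 1 (ys r) k = 0.
  exact: (psumr_eq0P (fun r' _ => (ys_in r').2 k) wk).
have heavy r : S <= c%:R * weight0 1 (ys r).
  apply: apex_weight_bound pk (wr_k r) _ => //.
  by apply: weight0_gt0_of_small_weights; [exact: (ys_in r).1|exact: (ys_in r).2|].
have : \sum_(r < h) S <= S.
  by rewrite -{2}cw0 mulr_sumr; apply: ler_sum => r _; exact: heavy.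
rewrite sumr_const card_ord; move: S_gt0; rewrite /S natz.
by rewrite -mulr_natr natz; move: (1 + sumn p)%N => s; nia.
Qed.
End Indecomposable.

(* The criterion: an entry c of p dividing 1 + sum p whose residues p_i mod c
   add up to at least c makes Delta_(1,p) fail IDP, witnessed by the lattice
   point x = (-floor(p_i / c))_i of the dilate by h = S/c - sum floor(p_i/c).
   The weights of x are S/c at the apex and S (p_i mod c) / c at e_i. *)
Lemma not_IDP_of_residues (R : realType) (p : seq nat) (c : nat) :
  c \in p -> (0 < c)%N -> (c %| 1 + sumn p)%N ->
  (c <= sumn [seq x %% c | x <- p])%N -> ~ IDP (@Delta R p).
Proof.
move=> c_in c_gt0 c_dvd residues_big IDPp.
pose k : 'I_(size p) := Ordinal (etrans (index_mem c p) c_in).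
have pk : nth 0%N p k = c by exact: nth_index.
set S := (1 + sumn p)%N; set s0 := (S %/ c)%N.
set D := sumn [seq (x %/ c)%N | x <- p].
have cs0 : (c * s0 = S)%N by rewrite mulnC divnK.
have h_ge2 : (2 <= s0 - D)%N by move: (sumn_divn_eq p c); rewrite -/D; nia.
set h := (s0 - D)%N in h_ge2.
pose x : 'rV[int]_(size p) := \row_i - (nth 0%N p i %/ c)%N%:Z.
have w0x : weight0 h%:R x = s0%:Z.
  rewrite /weight0; under eq_bigr do rewrite mxE -natz.
  by rewrite sumrN -natr_sum (sum_nth_map p (divn^~ c)) -/D natz; lia.
have cwx i : c%:Z * weight p h%:R x i = S%:Z * (nth 0%N p i %% c)%N.
  rewrite /weight w0x mxE !natz; move: (divn_eq (nth 0%N p i) c) cs0; lia.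
have wx_ge0 i : 0 <= weight p h%:R x i.
  by move: (cwx i); move: (weight p h%:R x i) => w; nia.
have wx_lt i : weight p h%:R x i < S%:R.
  move: (cwx i) (ltn_pmod (nth 0%N p i) c_gt0); rewrite natz.
  by move: (weight p h%:R x i) => w; nia.
have wx_k : weight p h%:R x k = 0.
  by move: (cwx k); rewrite pk modnn; move: (weight p h%:R x k) => w; nia.
have x_in : dilate h (@Delta R p) (lat R x).
  by apply: dilate_Delta_of_weights; rewrite ?w0x //; lia.
have [ys [ys_in xE]] := IDPp h ltac:(lia) x x_in.
move: xE; apply/eqP; apply: (not_sum_of_lattice_points h_ge2 pk _ wx_k wx_lt).
  by rewrite w0x natz; lia.
by move=> r; exact: lattice_Delta_weights.
Qed.

Local Close Scope ring_scope.

Lemma lcm_seq_gt0 (q : seq nat) : 0 \notin q -> 0 < lcm_seq q.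
Proof.
elim: q => [//|a q IH] /=; rewrite inE negb_or => /andP [a_neq0 q0].
by rewrite lcmn_gt0 (IH q0) andbT lt0n eq_sym.
Qed.

Lemma sumn_prepend_ones (k : nat) (q : seq nat) :
  sumn (prepend_ones k q) = k + sumn q.
Proof. by rewrite sumn_cat sumn_nseq mul1n. Qed.

Lemma rsn_reflexive (q : seq nat) :
  0 \notin q -> reflexive_weights (prepend_ones (rsn q) q).
Proof.
by rewrite /rsn => q0; case: ex_minnP => k; rewrite /rsn_pred (negbTE q0) orbF.
Qed.

(* Prepending a multiple of lcm(q) further ones preserves reflexivity, since
   every entry of q divides lcm(q). *)
Lemma reflexive_prepend_lcm (q : seq nat) (k t : nat) :
  reflexive_weights (prepend_ones k q) ->
  reflexive_weights (prepend_ones (k + t * lcm_seq q) q).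
Proof.
move=> /allP refl; apply/allP => a.
rewrite mem_cat mem_nseq => /orP [/andP [_ /eqP ->]|a_in]; first by rewrite dvd1n.
have a_div : a %| 1 + sumn (prepend_ones k q).
  by apply: refl; rewrite mem_cat a_in orbT.
have -> : 1 + sumn (prepend_ones (k + t * lcm_seq q) q)
          = 1 + sumn (prepend_ones k q) + t * lcm_seq q.
  by rewrite !sumn_prepend_ones; lia.
by rewrite dvdn_add // dvdn_mull // dvdn_lcm_seq.
Qed.

Lemma rs_reflexive (q : seq nat) (m : nat) :
  0 \notin q -> reflexive_weights (rs q m).
Proof. by move=> q0; apply/reflexive_prepend_lcm/rsn_reflexive. Qed.

Lemma residues_prepend_ones (k c : nat) (q : seq nat) :
  2 <= c -> k <= sumn [seq x %% c | x <- prepend_ones k q].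
Proof.
move=> c_ge2; rewrite map_cat sumn_cat; apply: leq_trans (leq_addr _ _).
by rewrite map_nseq modn_small // sumn_nseq mul1n.
Qed.

Theorem theorem5p4 (R : realType) (q : seq nat) :
  q != [::] -> all (fun qi => 2 <= qi) q ->
  forall m : nat, 2 <= m -> ~ IDP (@Delta R (rs q m)).
Proof.
case: q => [//|c q'] _ q_ge2 m m_ge2; set q := c :: q'.
have q0 : 0 \notin q by apply/negP => /(allP q_ge2).
have c_ge2 : 2 <= c by case/andP: q_ge2.
have c_in : c \in rs q m by rewrite mem_cat mem_head orbT.
have c_le_lcm : c <= lcm_seq q.
  exact: dvdn_leq (lcm_seq_gt0 q0) (dvdn_lcm_seq (mem_head c q')).
apply: (not_IDP_of_residues c_in); first by lia.
  by move/allP: (rs_reflexive m q0); apply.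
apply: leq_trans (residues_prepend_ones _ _ c_ge2); nia.
Qed.
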